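(* Let $K\ge 2$ and let $\boldsymbol{x}_1\in\mathbb{R}^{p_1},\dots,\boldsymbol{x}_K\in\mathbb{R}^{p_K}$ be random vectors whose entries lie in $\mathcal{L}_0^2$. Let $r_k=\dim\operatorname{span}(\boldsymbol{x}_k^\top)\ge 1$ and $r_f=\dim\sum_{k=1}^K\operatorname{span}(\boldsymbol{x}_k^\top)$. Let $\boldsymbol{f}_k\in\mathbb{R}^{r_k}$ be a random vector whose entries form an orthonormal basis of $\operatorname{span}(\boldsymbol{x}_k^\top)$ (so $\operatorname{cov}(\boldsymbol{f}_k)=\mathbf{I}_{r_k}$), let $\boldsymbol{f}=(\boldsymbol{f}_1^\top,\dots,\boldsymbol{f}_K^\top)^\top$, and let $\boldsymbol{\eta}^{(1)},\dots,\boldsymbol{\eta}^{(r_f)}$ be orthonormal eigenvectors of $\operatorname{cov}(\boldsymbol{f})$ with $\boldsymbol{\eta}^{(\ell)}$ corresponding to the $\ell$th largest eigenvalue $\lambda_\ell(\operatorname{cov}(\boldsymbol{f}))$; write $\boldsymbol{\eta}^{(\ell)}=((\boldsymbol{\eta}^{(\ell)}_1)^\top,\dots,(\boldsymbol{\eta}^{(\ell)}_K)^\top)^\top$ with $\boldsymbol{\eta}^{(\ell)}_k\in\mathbb{R}^{r_k}$. (Note $r_f=\operatorname{rank}\operatorname{cov}(\boldsymbol{f})$.) Consider, for $\ell=1,\dots,r_f$, the $\ell$th stage of Carroll's GCCA: $$\max_{z_1,\dots,z_K,w}\ \sum_{k=1}^K\cos^2\{\theta(z_k,w)\}\quad\text{s.t.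 } z_k\in\operatorname{span}(\boldsymbol{x}_k^\top),\ \|z_k\|=1\ (k\le K),\quad w\in\mathcal{L}_0^2,\ \|w\|=1,\ w\perp w^{(j)}\ (0\le j\le \ell-1),$$ where $w^{(0)}=0$ and $w^{(1)},\dots,w^{(\ell-1)}$ are the auxiliary variables chosen at the earlier stages. Then: (i) For every $\ell\le r_f$ and $k\le K$, a solution $(z^{(\ell)}_1,\dots,z^{(\ell)}_K,w^{(\ell)})$ of stage $\ell$ (with earlier stages solved in the same way) is given by $$w^{(\ell)}=[\lambda_\ell(\operatorname{cov}(\boldsymbol{f}))]^{-1/2}(\boldsymbol{\eta}^{(\ell)})^\top\boldsymbol{f},\qquad z_k^{(\ell)}=\begin{cases}\text{any standardized variable in }\operatorname{span}(\boldsymbol{x}_k^\top),&\boldsymbol{\eta}_k^{(\ell)}=\boldsymbol{0},\\ \pm(\boldsymbol{\eta}_k^{(\ell)}/\|\boldsymbol{\eta}_k^{(\ell)}\|_F)^\top\boldsymbol{f}_k,&\boldsymbol{\eta}_k^{(\ell)}\neq\boldsymbol{0}.\end{cases}$$ Moreover, $\cos\{\theta(z_k^{(\ell)},w^{(\ell)})\}=\pm[\lambda_\ell(\operatorname{cov}(\boldsymbol{f}))]^{1/2}\|\boldsymbol{\eta}_k^{(\ell)}\|_F$, $\sum_{k=1}^K\cos^2\{\theta(z_k^{(\ell)},w^{(\ell)})\}=\lambda_\ell(\operatorname{cov}(\boldsymbol{f}))$, and $\sum_{k=1}^K\operatorname{span}(\boldsymbol{x}_k^\top)=\operatorname{span}(\{w^{(\ell)}\}_{\ell=1}^{r_f})$.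 (ii) For $\ell\le r_f$, redefine $z_k^{(\ell)}=0$ if $\boldsymbol{\eta}_k^{(\ell)}=\boldsymbol{0}$ (equivalently $w^{(\ell)}\perp\operatorname{span}(\boldsymbol{x}_k^\top)$) and $z_k^{(\ell)}=(\boldsymbol{\eta}_k^{(\ell)}/\|\boldsymbol{\eta}_k^{(\ell)}\|_F)^\top\boldsymbol{f}_k$ otherwise. Then $\theta(z_k^{(\ell)},w^{(\ell)})\in[0,\pi/2]$ and $\operatorname{span}(\{z_k^{(\ell)}\}_{\ell=1}^{r_f})=\operatorname{span}(\boldsymbol{x}_k^\top)$ for every $k\le K$. (iii) For $z_k^{(\ell)}$ defined either as in (i) or as in (ii): if for some $\ell\le r_f$ and some $k\le K$ we have $\lambda_\ell(\operatorname{cov}(\boldsymbol{f}))\le 1$ and $\operatorname{span}(\{z_k^{(m)}\}_{m=1}^{\ell-1})\neq\operatorname{span}(\boldsymbol{x}_k^\top)$, then there exists a solution $w^{(\ell)}$ of the $\ell$th stage with $w^{(\ell)}\in\operatorname{span}(\boldsymbol{x}_k^\top)$ and $w^{(\ell)}\perp\sum_{1\le j\neq k\le K}\operatorname{span}(\boldsymbol{x}_j^\top)$.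
   Context: $\mathcal{L}_0^2$ denotes the vector space of real-valued random variables with zero mean and finite variance, endowed with the covariance $\operatorname{cov}(\cdot,\cdot)$ as inner product; $\|x\|=\sqrt{\operatorname{var}(x)}$, $\perp$ means zero covariance (uncorrelatedness), and $\theta(x,y)$ is the angle in this inner product space, so $\cos\{\theta(x,y)\}=\operatorname{corr}(x,y)$ with the convention $\operatorname{corr}(x,0)=0$. For a random vector $\boldsymbol{v}$ with entries in $\mathcal{L}_0^2$, $\operatorname{span}(\boldsymbol{v}^\top)$ is the subspace of $\mathcal{L}_0^2$ spanned by its entries, and sums of subspaces are the usual sums. A standardized variable is one with unit variance. *)

(* The ambient space L_0^2 is modelled abstractly as a
   vector space V over a real closed field R equipped with an inner product
   [cov] (covariance). *)
From HB Require Import structures.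
From mathcomp Require Import all_boot all_order all_algebra.
Set Implicit Arguments. Unset Strict Implicit. Unset Printing Implicit Defensive.
Import Order.TTheory GRing.Theory Num.Theory.
Local Open Scope ring_scope.

Section GCCA.
Variables (R : rcfType) (V : lmodType R) (cov : V -> V -> R).

Definition inner_product : Prop :=
  [/\ forall u v, cov u v = cov v u,
      forall (a : R) u v w, cov (a *: u + v) w = a * cov u w + cov v w
    & forall u, u != 0 -> 0 < cov u u].

Definition sd (u : V) : R := Num.sqrt (cov u u).

(* cos theta(u,v) = corr(u,v), with corr(u,0) = corr(0,v) = 0 *)
Definition corr (u v : V) : R :=
  if (sd u == 0) || (sd v == 0) then 0 else cov u v / (sd u * sd v).

Definition inspanP (I : finType) (P : pred I) (g : I -> V) (v : V) : Prop :=
  exists c : I -> R, v = \sum_(i | P i) c i *: g i.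

Definition inspan (I : finType) (g : I -> V) (v : V) : Prop :=
  inspanP predT g v.

Definition lin_indep (I : finType) (g : I -> V) : Prop :=
  forall c : I -> R, \sum_i c i *: g i = 0 -> forall i, c i = 0.

Definition is_dim (S : V -> Prop) (n : nat) : Prop :=
  exists b : 'I_n -> V, lin_indep b /\ (forall v, S v <-> inspan b v).

Definition orthonormalF (I : finType) (g : I -> V) : Prop :=
  forall i j, cov (g i) (g j) = (i == j)%:R.

Definition sum_span (K : nat) (p : 'I_K -> nat) (x : forall k, 'I_(p k) -> V)
  (P : pred 'I_K) (v : V) : Prop :=
  exists u : 'I_K -> V, (forall k, P k -> inspan (x k) (u k)) /\
                        v = \sum_(k | P k) u k.

(* feasible points of a GCCA stage, [prev] = previously chosen w^(j) *)
Definition stage_feasible (K : nat) (p : 'I_K -> nat)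
  (x : forall k, 'I_(p k) -> V) (prev : seq V) (z : 'I_K -> V) (w : V) : Prop :=
  [/\ forall k, inspan (x k) (z k) /\ cov (z k) (z k) = 1,
      cov w w = 1
    & forall u, u \in prev -> cov w u = 0].

Definition gcca_obj (K : nat) (z : 'I_K -> V) (w : V) : R :=
  \sum_k corr (z k) w ^+ 2.

Definition stage_solution (K : nat) (p : 'I_K -> nat)
  (x : forall k, 'I_(p k) -> V) (prev : seq V) (z : 'I_K -> V) (w : V) : Prop :=
  stage_feasible x prev z w /\
  forall z' w', stage_feasible x prev z' w' -> gcca_obj z' w' <= gcca_obj z w.

(* Objects built from f = (f_1^T,...,f_K^T)^T, indexed by {k & 'I_(r k)} *)
Variables (K : nat) (r : 'I_K -> nat) (fv : {k : 'I_K & 'I_(r k)} -> V).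

Definition fk (k : 'I_K) (i : 'I_(r k)) : V := fv (existT _ k i).

Definition etanorm (rf : nat) (eta : 'I_rf -> {k : 'I_K & 'I_(r k)} -> R)
  (l : 'I_rf) (k : 'I_K) : R :=
  Num.sqrt (\sum_(i < r k) eta l (existT _ k i) ^+ 2).

Definition wsol (rf : nat) (lam : 'I_rf -> R)
  (eta : 'I_rf -> {k : 'I_K & 'I_(r k)} -> R) (l : 'I_rf) : V :=
  (Num.sqrt (lam l))^-1 *: \sum_t eta l t *: fv t.

Definition zdir (rf : nat) (eta : 'I_rf -> {k : 'I_K & 'I_(r k)} -> R)
  (l : 'I_rf) (k : 'I_K) : V :=
  \sum_(i < r k) (eta l (existT _ k i) / etanorm eta l k) *: fk i.

Definition zII (rf : nat) (eta : 'I_rf -> {k : 'I_K & 'I_(r k)} -> R)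
  (l : 'I_rf) (k : 'I_K) : V :=
  if etanorm eta l k == 0 then 0 else zdir eta l k.

Definition validI (p : 'I_K -> nat) (x : forall k, 'I_(p k) -> V) (rf : nat)
  (eta : 'I_rf -> {k : 'I_K & 'I_(r k)} -> R) (l : 'I_rf) (k : 'I_K) (z : V)
  : Prop :=
  if etanorm eta l k == 0 then inspan (x k) z /\ cov z z = 1
  else exists s : R, (s = 1 \/ s = -1) /\ z = s *: zdir eta l k.

Definition prevw (rf : nat) (lam : 'I_rf -> R)
  (eta : 'I_rf -> {k : 'I_K & 'I_(r k)} -> R) (l : 'I_rf) : seq V :=
  [seq wsol lam eta m | m : 'I_rf <- enum 'I_rf & (m < l)%N].

End GCCA.

(* mu is the (l+1)-th largest eigenvalue (counted with multiplicity, l is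
   0-based) of the symmetric matrix A indexed by the finite type T:
   A has an orthonormalF eigenbasis with eigenvalues sorted nonincreasingly,
   and mu is the entry at position l. *)
Definition kth_eig (R : rcfType) (T : finType) (A : T -> T -> R) (l : nat)
  (mu : R) : Prop :=
  exists (e : 'I_#|T| -> T -> R) (nu : 'I_#|T| -> R),
    [/\ forall i j, \sum_t e i t * e j t = (i == j)%:R,
        forall i t, \sum_s A t s * e i s = nu i * e i t,
        forall i j : 'I_#|T|, (i <= j)%N -> nu j <= nu i
      & exists i : 'I_#|T|, val i = l /\ nu i = mu].

From HB Require Import structures.
From mathcomp Require Import all_boot all_order all_algebra.
From mathcomp Require Import ring.
Set Implicit Arguments. Unset Strict Implicit. Unset Printing Implicit Defensive.
Import Order.TTheory GRing.Theory Num.Theory.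
Local Open Scope ring_scope.

(* Describe a candidate [w] by [u = cov(f, w)].  As [f_k] is an orthonormal
   basis of span(x_k^T), Bessel's inequality bounds cos^2 theta(z_k, w) by the
   squared norm of the k-th block of [u], so the objective is at most
   |u|^2 = cov(u^T f, w) <= (u^T cov(f) u)^(1/2).  The constraints
   [w _|_ w^(j)] make [u] orthogonal to eta^(1), ..., eta^(l-1), and the
   Rayleigh-quotient bound u^T cov(f) u <= lambda_l |u|^2 gives the bound
   lambda_l, attained by w^(l).  Since lambda_l > 0 for l <= r_f = rank cov(f),
   the w^(l) are well defined and orthonormal, hence a basis of sum_k span(x_k^T), and their
   projections onto span(x_k^T) are the z_k^(l) of (ii).  For (iii), a unit
   variable of span(x_k^T) orthogonal to z_k^(1), ..., z_k^(l-1) is orthogonal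
   to w^(1), ..., w^(l-1) and its block of coordinates has Rayleigh quotient
   1: so lambda_l >= 1, and if lambda_l = 1 it is an eigenvector, i.e. the
   variable is orthogonal to every other span(x_j^T). *)

Section Span.
Variables (R : rcfType) (W : lmodType R).

Lemma inspanP_gen (I : finType) (P : pred I) (b : I -> W) i :
  P i -> inspanP P b (b i).
Proof.
move=> Pi; exists (fun j => (j == i)%:R).
rewrite (bigD1 i) //= eqxx scale1r big1 ?addr0 // => j /andP[_ /negbTE->].
by rewrite scale0r.
Qed.

Lemma inspanP0 (I : finType) (P : pred I) (b : I -> W) : inspanP P b 0.
Proof. by exists (fun=> 0); rewrite big1 // => i _; rewrite scale0r. Qed.

Lemma inspanPD (I : finType) (P : pred I) (b : I -> W) u v :
  inspanP P b u -> inspanP P b v -> inspanP P b (u + v).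
Proof.
move=> [c1 ->] [c2 ->]; exists (fun i => c1 i + c2 i).
by rewrite -big_split; apply: eq_bigr => i _; rewrite scalerDl.
Qed.

Lemma inspanPZ (I : finType) (P : pred I) (b : I -> W) a v :
  inspanP P b v -> inspanP P b (a *: v).
Proof.
move=> [c ->]; exists (fun i => a * c i).
by rewrite scaler_sumr; apply: eq_bigr => i _; rewrite scalerA.
Qed.

Lemma inspanP_sum (I J : finType) (P : pred I) (b : I -> W) (Q : pred J)
    (F : J -> W) :
  (forall j, Q j -> inspanP P b (F j)) -> inspanP P b (\sum_(j | Q j) F j).
Proof.
by move=> H; apply: big_ind => //; [exact: inspanP0 | exact: inspanPD].
Qed.

Lemma inspanP_trans (I J : finType) (P : pred I) (b : I -> W) (Q : pred J)
    (g : J -> W) v :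
  (forall j, Q j -> inspanP P b (g j)) -> inspanP Q g v -> inspanP P b v.
Proof. by move=> H [c ->]; apply: inspanP_sum => j Qj; exact/inspanPZ/H. Qed.

Lemma steinitz_ord n m (b : 'I_n -> W) (g : 'I_m -> W) :
  (forall j, inspan b (g j)) -> lin_indep g -> (m <= n)%N.
Proof.
move=> /fin_all_exists[cf cfP] g_indep; rewrite leqNgt; apply/negP => ltnm.
pose C : 'M[R]_(m, n) := \matrix_(j, i) cf j i.
have : kermx C != 0.
  rewrite -mxrank_eq0 mxrank_ker subn_eq0 -ltnNge.
  exact: leq_ltn_trans (rank_leq_col C) ltnm.
case/rowV0Pn => v /sub_kermxP vC0 v0.
have : \sum_j v 0 j *: g j = 0.
  transitivity (\sum_i (v *m C) 0 i *: b i); last first.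
    by rewrite vC0 big1 // => i _; rewrite mxE scale0r.
  under eq_bigr do rewrite cfP scaler_sumr.
  rewrite exchange_big /=; apply: eq_bigr => i _; rewrite !mxE scaler_suml.
  by apply: eq_bigr => j _; rewrite mxE scalerA.
move/g_indep => v_eq0; case/eqP: v0; apply/rowP => j; by rewrite mxE v_eq0.
Qed.

Lemma steinitz (I J : finType) (PI : pred I) (PJ : pred J) (b : I -> W)
    (g : J -> W) :
  (forall j, PJ j -> inspanP PI b (g j)) ->
  (forall c : J -> R, \sum_(j | PJ j) c j *: g j = 0 -> forall j, PJ j -> c j = 0) ->
  (#|PJ| <= #|PI|)%N.
Proof.
move=> g_span g_indep.
apply: (@steinitz_ord _ _ (b \o enum_val) (g \o enum_val)) => [k|c c0 k] /=.
  have /= [c ->] := g_span _ (enum_valP k); exists (c \o enum_val).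
  by rewrite -(big_enum_val (A := PI) (fun i => c i *: b i)); apply: eq_bigl.
pose c' j := c (enum_rank_in (enum_valP k) j).
suff /g_indep/(_ _ (enum_valP k)) : \sum_(j | PJ j) c' j *: g j = 0.
  by rewrite /c' enum_valK_in.
rewrite (eq_bigl (mem PJ)) // (big_enum_val (A := PJ) (fun j => c' j *: g j)).
by rewrite -[RHS]c0; apply: eq_bigr => i _; rewrite /c' enum_valK_in.
Qed.

End Span.

Section InnerProduct.
Variables (R : rcfType) (W : lmodType R) (ip : W -> W -> R).
Hypothesis hip : inner_product ip.

Lemma ip_sym u v : ip u v = ip v u.
Proof. by case: hip. Qed.

Lemma ip0l w : ip 0 w = 0.
Proof.
have [_ lin _] := hip; have := lin 1 0 0 w.
by rewrite scale1r addr0 mul1r => /(canLR (addrK _)); rewrite subrr.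
Qed.

Lemma ipDl u v w : ip (u + v) w = ip u w + ip v w.
Proof. by have [_ lin _] := hip; have := lin 1 u v w; rewrite scale1r mul1r. Qed.

Lemma ipZl a u w : ip (a *: u) w = a * ip u w.
Proof. by have [_ lin _] := hip; rewrite -[a *: u]addr0 lin ip0l addr0. Qed.

Lemma ipBl u v w : ip (u - v) w = ip u w - ip v w.
Proof. by rewrite ipDl -scaleN1r ipZl mulN1r. Qed.

Lemma ipZr a u w : ip w (a *: u) = a * ip w u.
Proof. by rewrite !(ip_sym w) ipZl. Qed.

Lemma ipBr u v w : ip w (u - v) = ip w u - ip w v.
Proof. by rewrite !(ip_sym w) ipBl. Qed.

Lemma ip_suml (I : finType) (P : pred I) (F : I -> W) w :
  ip (\sum_(i | P i) F i) w = \sum_(i | P i) ip (F i) w.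
Proof. exact: (big_morph (ip^~ w) (fun u v => ipDl u v w) (ip0l w)). Qed.

Lemma ip_sumr (I : finType) (P : pred I) (F : I -> W) w :
  ip w (\sum_(i | P i) F i) = \sum_(i | P i) ip w (F i).
Proof. by rewrite ip_sym ip_suml; apply: eq_bigr => i _; rewrite ip_sym. Qed.

Lemma ip_gt0 u : u != 0 -> 0 < ip u u.
Proof. by case: hip => _ _; apply. Qed.

Lemma ip_ge0 u : 0 <= ip u u.
Proof.
have [->|u0] := eqVneq u 0; first by rewrite ip0l.
exact/ltW/ip_gt0.
Qed.

Lemma ip_eq0 u : ip u u = 0 -> u = 0.
Proof. by have [//|/ip_gt0] := eqVneq u 0; rewrite lt_def => /andP[/eqP]. Qed.

Lemma cauchy_schwarz u v : ip u v ^+ 2 <= ip u u * ip v v.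
Proof.
have [->|u0] := eqVneq u 0; first by rewrite !ip0l expr0n /= mul0r.
have pu := ip_gt0 u0.
pose t := ip u v / ip u u.
have := ip_ge0 (v - t *: u).
rewrite ipBl !ipBr !ipZl !ipZr (ip_sym v u).
have -> : ip v v - t * ip u v - (t * ip u v - t * (t * ip u u)) =
          (ip u u * ip v v - ip u v ^+ 2) / ip u u.
  by rewrite /t; field; rewrite gt_eqF.
by rewrite pmulr_lge0 ?invr_gt0 // subr_ge0.
Qed.

Lemma ip_normalize v : v != 0 ->
  ip ((Num.sqrt (ip v v))^-1 *: v) ((Num.sqrt (ip v v))^-1 *: v) = 1.
Proof.
move=> /ip_gt0 v_gt0.
by rewrite ipZl ipZr mulrA -expr2 exprVn sqr_sqrtr ?mulVf ?gt_eqF // ltW.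
Qed.

Lemma corr_unit u v : ip u u = 1 -> ip v v = 1 -> corr ip u v = ip u v.
Proof. by move=> u1 v1; rewrite /corr /sd u1 v1 sqrtr1 oner_eq0 mulr1 divr1. Qed.

Lemma orthogonal_indep (I : finType) (P : pred I) (g : I -> W) :
  (forall i j, P i -> P j -> i != j -> ip (g i) (g j) = 0) ->
  (forall i, P i -> ip (g i) (g i) != 0) ->
  forall c : I -> R, \sum_(j | P j) c j *: g j = 0 -> forall j, P j -> c j = 0.
Proof.
move=> g_orth g_nz c c0 j Pj.
have := congr1 (ip^~ (g j)) c0; rewrite /= ip0l ip_suml (bigD1 j) //= big1.
  by rewrite addr0 ipZl => /eqP; rewrite mulf_eq0 (negbTE (g_nz _ Pj)) orbF => /eqP.
by move=> i /andP[Pi nij]; rewrite ipZl g_orth ?mulr0.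
Qed.

(* A nonzero residual [v - \sum_j ip v (g j) *: g j] would extend [g] to an
   orthogonal family larger than the spanning family [b]. *)
Lemma orthonormal_expansion (I J : finType) (PI : pred I) (PJ : pred J)
    (b : I -> W) (g : J -> W) :
  (#|PI| <= #|PJ|)%N ->
  (forall j j', PJ j -> PJ j' -> ip (g j) (g j') = (j == j')%:R) ->
  (forall j, PJ j -> inspanP PI b (g j)) ->
  forall v, inspanP PI b v -> v = \sum_(j | PJ j) ip v (g j) *: g j.
Proof.
move=> leIJ g_on g_span v v_span.
pose v' := v - \sum_(j | PJ j) ip v (g j) *: g j.
suff : v' = 0 by move/eqP; rewrite subr_eq0 => /eqP.
apply/eqP/negPn/negP => v'0.
have v'_orth j : PJ j -> ip v' (g j) = 0.
  move=> Pj; rewrite /v' ipBl ip_suml (bigD1 j) //= ipZl g_on // eqxx mulr1.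
  rewrite big1 ?addr0 ?subrr // => i /andP[Pi nij].
  by rewrite ipZl g_on // (negbTE nij) mulr0.
pose h (o : option J) := if o is Some j then g j else v'.
pose Ph (o : option J) := if o is Some j then PJ j else true.
have card_Ph : #|Ph| = #|PJ|.+1.
  rewrite (cardD1 None) -(card_image (@Some_inj _) PJ) add1n; congr (_.+1).
  apply: eq_card => -[j|]; last by rewrite !inE /=; apply/esym/imageP => -[].
  by rewrite (mem_image (@Some_inj _)).
suff : (#|PJ|.+1 <= #|PJ|)%N by rewrite ltnn.
rewrite -card_Ph; apply: leq_trans leIJ; apply: (@steinitz _ _ _ _ PI Ph b h).
  move=> [j /= Pj|_ /=]; first exact: g_span.
  apply: inspanPD => //; rewrite -scaleN1r; apply/inspanPZ/inspanP_sum => j Pj.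
  exact/inspanPZ/g_span.
apply: orthogonal_indep => [[i|] [j|] /= Pi Pj nij|[i /= Pi|_ /=]].
- by rewrite g_on // (_ : i == j = false) //; apply: contraNF nij => /eqP ->.
- by rewrite ip_sym v'_orth.
- by rewrite v'_orth.
- by move: nij => /eqP.
- by rewrite g_on // eqxx oner_eq0.
- by apply: contra v'0 => /eqP/ip_eq0 ->.
Qed.

Section Orthonormal.
Variables (I : finType) (g : I -> W).
Hypothesis g_on : orthonormalF ip g.

Lemma ip_orthonormal_coef (c : I -> R) i : ip (\sum_j c j *: g j) (g i) = c i.
Proof.
rewrite ip_suml (bigD1 i) //= ipZl g_on eqxx mulr1 big1 ?addr0 // => j nji.
by rewrite ipZl g_on (negbTE nji) mulr0.
Qed.

Lemma ip_orthonormal_norm (c : I -> R) :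
  ip (\sum_i c i *: g i) (\sum_i c i *: g i) = \sum_i c i ^+ 2.
Proof.
rewrite {1}ip_suml; apply: eq_bigr => i _.
by rewrite ipZl ip_sym ip_orthonormal_coef expr2.
Qed.

Lemma orthonormal_span_expand v : inspan g v -> v = \sum_i ip v (g i) *: g i.
Proof.
by move=> [c ->]; apply: eq_bigr => i _; rewrite ip_orthonormal_coef.
Qed.

Lemma ip_orthonormal_proj u v :
  inspan g v -> ip u v = ip (\sum_i ip u (g i) *: g i) v.
Proof.
move/orthonormal_span_expand=> {1}->; rewrite ip_sumr ip_suml.
by apply: eq_bigr => i _; rewrite ipZl ipZr mulrC (ip_sym (g i) v).
Qed.

Lemma bessel_unit z w :
  inspan g z -> ip z z = 1 -> ip z w ^+ 2 <= \sum_i ip (g i) w ^+ 2.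
Proof.
move=> z_span z1; rewrite ip_sym (ip_orthonormal_proj w z_span) ip_sym.
apply: le_trans (cauchy_schwarz _ _) _; rewrite z1 mul1r ip_orthonormal_norm.
by under eq_bigr do rewrite ip_sym.
Qed.

End Orthonormal.

(* If the matrix [(ip (h j) (g i))] had full column rank, each [g i] would be
   a combination of the [h j]. *)
Lemma orthogonal_in_span n m (g : 'I_n -> W) (P : pred 'I_m) (h : 'I_m -> W) :
  orthonormalF ip g -> (forall j, P j -> inspan g (h j)) ->
  ~ (forall v, inspan g v -> inspanP P h v) ->
  exists2 v, inspan g v /\ v != 0 & forall j, P j -> ip (h j) v = 0.
Proof.
move=> g_on h_span h_nspan.
pose G : 'M[R]_(m, n) := \matrix_(j, i) (if P j then ip (h j) (g i) else 0).
have : kermx G^T != 0.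
  apply/negP => /eqP ker0; apply: h_nspan => v v_span.
  apply: inspanP_trans v_span => i _.
  have [B BG] : exists B, B *m G = 1%:M.
    apply/row_fullP; rewrite /row_full eqn_leq rank_leq_col /=.
    by have := mxrank_ker G^T; rewrite ker0 mxrank0 mxrank_tr => /esym/eqP; rewrite subn_eq0.
  exists (B i); transitivity (\sum_i' (1%:M : 'M[R]_n) i i' *: g i').
    rewrite (bigD1 i) //= mxE eqxx scale1r big1 ?addr0 // => j nj.
    by rewrite mxE eq_sym (negbTE nj) scale0r.
  rewrite -BG; under eq_bigr do rewrite mxE scaler_suml.
  rewrite exchange_big /= (bigID P) /= [X in _ + X]big1 ?addr0 => [|j Pj]; last first.
    by apply: big1 => i' _; rewrite mxE (negbTE Pj) mulr0 scale0r.
  apply: eq_bigr => j Pj; rewrite [in RHS](orthonormal_span_expand g_on (h_span j Pj)).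
  by rewrite scaler_sumr; apply: eq_bigr => i' _; rewrite mxE Pj scalerA.
case/rowV0Pn => y /sub_kermxP yG y0.
exists (\sum_i y 0 i *: g i); first split.
- by exists (y 0).
- apply: contra y0 => /eqP v0; apply/eqP/rowP => i; rewrite mxE.
  by rewrite -(ip_orthonormal_coef g_on (y 0) i) v0 ip0l.
- move=> j Pj; transitivity ((y *m G^T) 0 j); last by rewrite yG mxE.
  rewrite ip_sumr mxE; apply: eq_bigr => i _.
  by rewrite ipZr !mxE Pj mulrC.
Qed.

End InnerProduct.

Lemma card_ord_lt N m : (m <= N)%N -> #|[pred i : 'I_N | (i < m)%N]| = m.
Proof.
move=> le_mN; have widen_inj : injective (widen_ord le_mN).
  by move=> a b /(congr1 val) /= /val_inj.
rewrite -{2}(card_ord m) -(card_image widen_inj).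
apply: eq_card => i; rewrite !inE; apply/idP/imageP => [lt_im|[k _ ->]].
  by exists (Ordinal lt_im) => //; apply: val_inj.
by rewrite /= ltn_ord.
Qed.

Lemma card_ord_le N m : (#|[pred i : 'I_N | (i < m)%N]| <= m)%N.
Proof.
have [le_mN|lt_Nm] := leqP m N; first by rewrite card_ord_lt.
by apply: leq_trans (max_card _) _; rewrite card_ord ltnW.
Qed.

Section Spectral.
Variables (R : rcfType) (T : finType) (A : T -> T -> R).
Hypothesis A_sym : forall t s, A t s = A s t.

Local Notation vec := {ffun T -> R^o}.

Lemma vecZE a (u : vec) t : (a *: u) t = a * (u t : R).
Proof. by rewrite ffunE. Qed.

Definition dot (u v : vec) : R := \sum_t (u t : R) * (v t : R).

Lemma dot_ip : inner_product dot.
Proof.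
split=> [u v|a u v w|u u0].
- by apply: eq_bigr => t _; rewrite mulrC.
- rewrite /dot mulr_sumr -big_split; apply: eq_bigr => t _.
  by rewrite !ffunE mulrDl mulrA.
- have sq_ge0 t : 0 <= (u t : R) * u t by rewrite -expr2 sqr_ge0.
  rewrite lt_def sumr_ge0 // andbT; apply: contra u0 => /eqP u2_eq0.
  apply/eqP/ffunP => t; rewrite ffunE.
  have /eqP := psumr_eq0P (fun t _ => sq_ge0 t) u2_eq0 (i := t) isT.
  by rewrite mulf_eq0 orbb => /eqP.
Qed.

Definition Aop (u : vec) : vec := [ffun t => \sum_s A t s * u s].

Lemma Aop_sym u v : dot (Aop u) v = dot u (Aop v).
Proof.
rewrite /dot; under eq_bigr do rewrite ffunE mulr_suml.
under [RHS]eq_bigr do rewrite ffunE mulr_sumr.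
rewrite exchange_big; apply: eq_bigr => s _; apply: eq_bigr => t _.
by rewrite A_sym mulrCA mulrA.
Qed.

Lemma Aop_comb (I : finType) (c : I -> R) (g : I -> vec) :
  Aop (\sum_i c i *: g i) = \sum_i c i *: Aop (g i).
Proof.
apply/ffunP => t; rewrite [LHS]ffunE [RHS]sum_ffunE.
under eq_bigr do rewrite sum_ffunE mulr_sumr.
rewrite exchange_big; apply: eq_bigr => i _.
by rewrite vecZE !ffunE mulr_sumr; apply: eq_bigr => s _; rewrite vecZE mulrCA.
Qed.

Definition ev (I : Type) (e : I -> T -> R) i : vec := [ffun t => e i t].

Lemma ev_orthonormal (I : finType) (e : I -> T -> R) :
  (forall i j, \sum_t e i t * e j t = (i == j)%:R) -> orthonormalF dot (ev e).
Proof. by move=> e_on i j; rewrite -e_on; apply: eq_bigr => t _; rewrite !ffunE. Qed.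

Lemma Aop_ev (I : Type) (e : I -> T -> R) nu i :
  (forall t, \sum_s A t s * e i s = nu * e i t) -> Aop (ev e i) = nu *: ev e i.
Proof.
move=> e_eig; apply/ffunP => t; rewrite vecZE !ffunE -e_eig.
by apply: eq_bigr => s _; rewrite ffunE.
Qed.

Definition eigbasis (e : 'I_#|T| -> T -> R) (nu : 'I_#|T| -> R) : Prop :=
  (forall i j, \sum_t e i t * e j t = (i == j)%:R) /\
  (forall i t, \sum_s A t s * e i s = nu i * e i t).

Section Eigenbasis.
Variables (e : 'I_#|T| -> T -> R) (nu : 'I_#|T| -> R).
Hypothesis e_basis : eigbasis e nu.

Let e_on : orthonormalF dot (ev e). Proof. exact: ev_orthonormal (proj1 e_basis). Qed.
Let e_eig i : Aop (ev e i) = nu i *: ev e i. Proof. exact: Aop_ev (proj2 e_basis i). Qed.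

Lemma eigbasis_expand u : u = \sum_i dot u (ev e i) *: ev e i.
Proof.
pose delta t : vec := [ffun s => (s == t)%:R].
have delta_span (v : vec) : inspan delta v.
  exists (fun t => v t); apply/ffunP => s; rewrite sum_ffunE (bigD1 s) //=.
  rewrite vecZE ffunE eqxx mulr1 big1 ?addr0 // => t nts.
  by rewrite vecZE ffunE eq_sym (negbTE nts) mulr0.
apply: (orthonormal_expansion dot_ip (PI := predT) (PJ := predT) (b := delta)).
- by rewrite !cardT -!cardE card_ord.
- by move=> j j' _ _; apply: e_on.
- by move=> j _; apply: delta_span.
- exact: delta_span.
Qed.

Lemma eigvec_dot_ev g mu i : Aop g = mu *: g -> dot g (ev e i) * (nu i - mu) = 0.
Proof.
move=> g_eig; have := Aop_sym g (ev e i).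
rewrite g_eig e_eig (ipZl dot_ip) (ipZr dot_ip) => h.
by rewrite mulrBr [_ * nu i]mulrC -h mulrC subrr.
Qed.

Lemma Aop_eigbasis_expand u : Aop u = \sum_i (dot u (ev e i) * nu i) *: ev e i.
Proof.
by rewrite {1}[u]eigbasis_expand Aop_comb; apply: eq_bigr => i _; rewrite e_eig scalerA.
Qed.

Lemma eigbasis_rayleigh_gap mu u :
  mu * dot u u - dot u (Aop u) = \sum_i dot u (ev e i) ^+ 2 * (mu - nu i).
Proof.
have uu : dot u u = \sum_i dot u (ev e i) ^+ 2.
  rewrite {2}[u]eigbasis_expand (ip_sumr dot_ip).
  by apply: eq_bigr => i _; rewrite (ipZr dot_ip) expr2.
have uAu : dot u (Aop u) = \sum_i dot u (ev e i) ^+ 2 * nu i.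
  rewrite Aop_eigbasis_expand (ip_sumr dot_ip).
  by apply: eq_bigr => i _; rewrite (ipZr dot_ip); ring.
by rewrite uu uAu mulr_sumr -sumrB; apply: eq_bigr => i _; ring.
Qed.

Section Eigvecs.
Variables (Q : pred R) (J : finType) (PJ : pred J) (g : J -> vec) (mu : J -> R).
Hypothesis g_on : forall j j', PJ j -> PJ j' -> dot (g j) (g j') = (j == j')%:R.
Hypothesis g_eig : forall j, PJ j -> Aop (g j) = mu j *: g j.
Hypothesis mu_Q : forall j, PJ j -> Q (mu j).

Lemma eigvec_in_eigenspace j : PJ j -> inspanP [pred i | Q (nu i)] (ev e) (g j).
Proof.
move=> Pj; exists (fun i => dot (g j) (ev e i)).
rewrite {1}(eigbasis_expand (g j)) (bigID [pred i | Q (nu i)]) /=.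
rewrite [X in _ + X]big1 ?addr0 // => i nQi.
have /eqP := eigvec_dot_ev i (g_eig Pj); rewrite mulf_eq0 subr_eq0.
case/orP => [/eqP->|/eqP nu_mu]; first by rewrite scale0r.
by rewrite nu_mu mu_Q in nQi.
Qed.

Lemma eigvecs_card_le : (#|PJ| <= #|[pred i | Q (nu i)]|)%N.
Proof.
apply: (steinitz eigvec_in_eigenspace); apply: (orthogonal_indep dot_ip).
  by move=> i j Pi Pj nij; rewrite g_on // (negbTE nij).
by move=> i Pi; rewrite g_on // eqxx oner_eq0.
Qed.

Lemma eigvecs_span : (#|[pred i | Q (nu i)]| <= #|PJ|)%N ->
  forall i, Q (nu i) -> inspanP PJ g (ev e i).
Proof.
move=> le_card i Qi; exists (fun j => dot (ev e i) (g j)).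
by apply: (orthonormal_expansion dot_ip le_card g_on eigvec_in_eigenspace); exact: inspanP_gen.
Qed.

End Eigvecs.
End Eigenbasis.

Lemma eigbasis_card_eq e nu e' nu' (Q : pred R) : eigbasis e nu -> eigbasis e' nu' ->
  #|[pred i | Q (nu i)]| = #|[pred i | Q (nu' i)]|.
Proof.
have card_le f g f' g' : eigbasis f g -> eigbasis f' g' ->
    (#|[pred i | Q (g i)]| <= #|[pred i | Q (g' i)]|)%N.
  move=> [f_on f_eig] f'g'; apply: (eigvecs_card_le f'g' (g := ev f) (mu := g)) => //.
  - by move=> i j _ _; apply: ev_orthonormal.
  - by move=> i _; apply: Aop_ev.
move=> e_basis e'_basis; apply/eqP.
by rewrite eqn_leq (card_le _ _ _ _ e_basis e'_basis) (card_le _ _ _ _ e'_basis e_basis).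
Qed.

Section Rayleigh.
Variables (rf : nat) (lam : 'I_rf -> R) (eta : 'I_rf -> T -> R).
Hypothesis eta_on : forall l l' : 'I_rf, \sum_t eta l t * eta l' t = (l == l')%:R.
Hypothesis eta_eig : forall (l : 'I_rf) t, \sum_s A t s * eta l s = lam l * eta l t.
Hypothesis lam_kth : forall l : 'I_rf, kth_eig A l (lam l).

Lemma eigbasis_card_gt e nu (m : 'I_rf) mu : eigbasis e nu -> lam m <= mu ->
  (#|[pred i | (mu < nu i)%R]| <= m)%N.
Proof.
move=> e_basis le_lam_mu.
have [e' [nu' [e'_on e'_eig nu'_sorted [i1 [i1m nu'i1]]]]] := lam_kth m.
rewrite (eigbasis_card_eq _ e_basis (conj e'_on e'_eig)).
apply: leq_trans (card_ord_le _ m) ; apply: subset_leq_card; apply/subsetP => i.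
rewrite !inE ltnNge; apply: contraL => le_m_i; rewrite -leNgt.
by rewrite (le_trans _ le_lam_mu) // -nu'i1 nu'_sorted // i1m.
Qed.

(* With [n0] minimal such that [lam n0 <= lam l], at most [n0] eigenvalues
   exceed [lam l], and [lam 0], ..., [lam n0.-1] are [n0] of them. *)
Lemma eigbasis_top_in_span e nu (l : 'I_rf) i : eigbasis e nu -> lam l < nu i ->
  inspanP [pred m : 'I_rf | (m < l)%N && (lam l < lam m)] (ev eta) (ev e i).
Proof.
move=> e_basis lt_lam_nu.
pose P n := [exists m : 'I_rf, (val m == n) && (val m <= l)%N && (lam m <= lam l)].
have exP : exists n, P n by exists (val l); apply/existsP; exists l; rewrite eqxx leqnn lexx.
case: (ex_minnP exP) => n0 /existsP [m0 /andP[/andP[/eqP m0n0 m0l] lam_m0]] n0_min.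
have n0_le : (n0 <= #|[pred m : 'I_rf | (m < l)%N && (lam l < lam m)%R]|)%N.
  have le_n0_rf : (n0 <= rf)%N by rewrite -m0n0 ltnW ?ltn_ord.
  rewrite -{1}(card_ord_lt le_n0_rf).
  apply: subset_leq_card; apply/subsetP => m; rewrite !inE => lt_m_n0.
  have lt_ml : (m < l)%N by apply: leq_trans lt_m_n0 _; rewrite -m0n0.
  rewrite lt_ml ltNge /=; apply: contraL lt_m_n0 => le_lam.
  by rewrite -leqNgt n0_min //; apply/existsP; exists m; rewrite eqxx ltnW.
apply: (eigvecs_span e_basis (Q := fun x => lam l < x) (mu := lam)) => //.
- by move=> j j' _ _; apply: ev_orthonormal.
- by move=> j _; apply: Aop_ev.
- by move=> j /andP[].
- by apply: leq_trans _ n0_le; rewrite -m0n0; exact: eigbasis_card_gt e_basis lam_m0.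
Qed.

Section Orthogonal.
Variables (l : 'I_rf) (u : vec).
Hypothesis u_orth : forall m : 'I_rf, (m < l)%N -> dot (ev eta m) u = 0.

Lemma rayleigh_gap_ge0 : exists e nu, eigbasis e nu /\
  forall i, 0 <= dot u (ev e i) ^+ 2 * (lam l - nu i).
Proof.
have [e [nu [e_on e_eig _ _]]] := lam_kth l.
exists e, nu; split=> [|i]; first by split.
have [lt_lam_nu|le_nu_lam] := ltP (lam l) (nu i); last by rewrite mulr_ge0 ?sqr_ge0 ?subr_ge0.
have [c ->] := eigbasis_top_in_span (conj e_on e_eig) lt_lam_nu.
rewrite (ip_sumr dot_ip) big1 ?expr0n ?mul0r // => m /andP[lt_ml _].
by rewrite (ipZr dot_ip) (ip_sym dot_ip) u_orth ?mulr0.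
Qed.

Lemma rayleigh_le : dot u (Aop u) <= lam l * dot u u.
Proof.
have [e [nu [e_basis gap_ge0]]] := rayleigh_gap_ge0.
by rewrite -subr_ge0 (eigbasis_rayleigh_gap e_basis) sumr_ge0.
Qed.

Lemma rayleigh_eq : dot u (Aop u) = lam l * dot u u -> Aop u = lam l *: u.
Proof.
move=> uAu; have [e [nu [e_basis gap_ge0]]] := rayleigh_gap_ge0.
have /psumr_eq0P gap_eq0 : \sum_i dot u (ev e i) ^+ 2 * (lam l - nu i) = 0.
  by rewrite -(eigbasis_rayleigh_gap e_basis) uAu subrr.
rewrite (Aop_eigbasis_expand e_basis) {2}[u](eigbasis_expand e_basis) scaler_sumr.
apply: eq_bigr => i _; rewrite scalerA; congr (_ *: _).
have /eqP := gap_eq0 (fun i _ => gap_ge0 i) i isT.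
by rewrite mulf_eq0 sqrf_eq0 subr_eq0 => /orP[/eqP->|/eqP->]; rewrite ?mul0r ?mulr0 // mulrC.
Qed.

End Orthogonal.
End Rayleigh.
End Spectral.

Section Carroll.
Variables (R : rcfType) (V : lmodType R) (cov : V -> V -> R)
  (K : nat) (p : 'I_K -> nat) (x : forall k : 'I_K, 'I_(p k) -> V)
  (r : 'I_K -> nat) (fv : {k : 'I_K & 'I_(r k)} -> V)
  (rf : nat) (lam : 'I_rf -> R) (eta : 'I_rf -> {k : 'I_K & 'I_(r k)} -> R).
Arguments x : clear implicits.
Hypothesis hip : inner_product cov.
Hypothesis f_basis : forall k : 'I_K,
  orthonormalF cov (fun i : 'I_(r k) => fk fv i) /\
  (forall v, inspan (x k) v <-> inspan (fun i : 'I_(r k) => fk fv i) v).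
Hypothesis rf_dim : is_dim (sum_span x predT) rf.
Hypothesis eta_on : forall l l' : 'I_rf, \sum_t eta l t * eta l' t = (l == l')%:R.
Hypothesis eta_eig : forall (l : 'I_rf) t,
  \sum_s cov (fv t) (fv s) * eta l s = lam l * eta l t.
Hypothesis lam_kth : forall l : 'I_rf,
  kth_eig (fun t s => cov (fv t) (fv s)) l (lam l).

Local Notation T := {k : 'I_K & 'I_(r k)}.
Local Notation vec := {ffun T -> R^o}.
Local Notation A := (fun t s => cov (fv t) (fv s)).
Local Notation w := (wsol fv lam eta).

Let A_sym t s : A t s = A s t. Proof. exact: ip_sym. Qed.

Lemma sum_blocks (M : nmodType) (G : T -> M) :
  \sum_t G t = \sum_k \sum_(i < r k) G (existT _ k i).
Proof.
rewrite (@sig_big_dep _ _ _ _ (fun k => 'I_(r k) : finType) predT (fun=> predT)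
  (fun k i => G (existT _ k i))) /=.
by apply: eq_bigr => -[k i].
Qed.

Lemma fk_on k : orthonormalF cov (fun i : 'I_(r k) => fk fv i).
Proof. exact: (f_basis k).1. Qed.

Lemma fk_inspan k (i : 'I_(r k)) : inspan (x k) (fk fv i).
Proof. by apply/(f_basis k).2/inspanP_gen. Qed.

Lemma inspan_fk k v : inspan (x k) v <-> inspan (fun i : 'I_(r k) => fk fv i) v.
Proof. exact: (f_basis k).2. Qed.

Lemma fk_expand k v : inspan (x k) v -> v = \sum_(i < r k) cov v (fk fv i) *: fk fv i.
Proof. by move=> /inspan_fk /(orthonormal_span_expand hip (@fk_on k)). Qed.

Lemma cov_fk_norm k v : inspan (x k) v -> cov v v = \sum_(i < r k) cov (fk fv i) v ^+ 2.
Proof.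
move=> v_span; rewrite {1 2}(fk_expand v_span) (ip_orthonormal_norm hip (@fk_on k)).
by under eq_bigr do rewrite (ip_sym hip).
Qed.

Definition fcomb (u : vec) : V := \sum_t (u t : R) *: fv t.
Definition covs (v : V) : vec := [ffun t => cov (fv t) v].

Lemma fcomb_comb (I : finType) (c : I -> R) (g : I -> vec) :
  fcomb (\sum_i c i *: g i) = \sum_i c i *: fcomb (g i).
Proof.
rewrite /fcomb; under eq_bigr do rewrite sum_ffunE scaler_suml.
rewrite exchange_big; apply: eq_bigr => i _; rewrite scaler_sumr.
by apply: eq_bigr => t _; rewrite vecZE scalerA.
Qed.

Lemma cov_fcomb u v : cov (fcomb u) v = dot u (covs v).
Proof. by rewrite (ip_suml hip); apply: eq_bigr => t _; rewrite (ipZl hip) ffunE. Qed.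

Lemma covs_fcomb u : covs (fcomb u) = Aop A u.
Proof.
apply/ffunP => t; rewrite !ffunE (ip_sumr hip); apply: eq_bigr => s _.
by rewrite (ipZr hip) mulrC.
Qed.

Lemma fcomb_delta t : fcomb [ffun s => (s == t)%:R] = fv t.
Proof.
rewrite /fcomb (bigD1 t) //= ffunE eqxx scale1r big1 ?addr0 // => s nst.
by rewrite ffunE (negbTE nst) scale0r.
Qed.

Lemma sum_span_fv v : sum_span x predT v <-> inspan fv v.
Proof.
split=> [[u [u_span ->]]|[c ->]].
  apply: inspanP_sum => k _; have [c ->] := (inspan_fk k _).1 (u_span k isT).
  by apply: inspanP_sum => i _; apply/inspanPZ/(inspanP_gen fv (i := existT _ k i)).
exists (fun k => \sum_(i < r k) c (existT _ k i) *: fk fv i); split; last first.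
  by rewrite sum_blocks.
by move=> k _; apply/inspan_fk; exists (fun i => c (existT _ k i)).
Qed.

(* Otherwise [cov(f)] would have rank at most [l < rf]: the [f] would lie in
   the span of the images of [l] eigenvectors. *)
Lemma lam_gt0 l : 0 < lam l.
Proof.
rewrite ltNge; apply/negP => lam_le0.
have [e [nu [e_on e_eig nu_sorted [i0 [i0l nu_i0]]]]] := lam_kth l.
have e_basis : eigbasis A e nu by [].
pose g i := fcomb (ev e i).
have g_norm i : cov (g i) (g i) = nu i.
  rewrite cov_fcomb covs_fcomb (Aop_ev (e_eig i)) (ipZr (dot_ip _ _)).
  by rewrite (ev_orthonormal e_on) eqxx mulr1.
have g0 i : (l <= nat_of_ord i)%N -> g i = 0.
  move=> le_li; apply: (ip_eq0 hip); apply/eqP; rewrite eq_le {1}g_norm ip_ge0 // andbT.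
  by apply: le_trans lam_le0; rewrite -nu_i0 nu_sorted // i0l.
have fv_span t : inspanP (fun i : 'I__ => (i < l)%N) g (fv t).
  exists (fun i => e i t); rewrite -fcomb_delta.
  rewrite {1}(eigbasis_expand e_basis [ffun s => (s == t)%:R]) fcomb_comb.
  rewrite (bigID (fun i : 'I__ => (i < l)%N)) /= [X in _ + X]big1 ?addr0.
    apply: eq_bigr => i _; congr (_ *: _); rewrite /dot (bigD1 t) //= !ffunE eqxx mul1r.
    by rewrite big1 ?addr0 // => s nst; rewrite ffunE (negbTE nst) mul0r.
  by move=> i; rewrite -leqNgt => /g0; rewrite /g => ->; rewrite scaler0.
have [b [b_indep b_span]] := rf_dim.
have b_in j : inspanP (fun i : 'I__ => (i < l)%N) g (b j).
  apply: (inspanP_trans (Q := predT) (g := fv)) => [t _|]; first exact: fv_span.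
  exact/(sum_span_fv _).1/(b_span _).2/inspanP_gen.
have := steinitz (PJ := predT) (fun j _ => b_in j) (fun c c0 j _ => b_indep c c0 j).
rewrite cardT -cardE card_ord => /leq_trans/(_ (card_ord_le _ l)).
by rewrite leqNgt ltn_ord.
Qed.

Lemma sqrt_lam_gt0 l : 0 < Num.sqrt (lam l).
Proof. by rewrite sqrtr_gt0 lam_gt0. Qed.

Lemma sqr_sqrt_lam l : Num.sqrt (lam l) ^+ 2 = lam l.
Proof. by rewrite sqr_sqrtr // ltW // lam_gt0. Qed.

Lemma wsol_fcomb l : w l = (Num.sqrt (lam l))^-1 *: fcomb (ev eta l).
Proof. by rewrite /wsol /fcomb; congr (_ *: _); apply: eq_bigr => t _; rewrite ffunE. Qed.

Lemma cov_w l v : cov (w l) v = (Num.sqrt (lam l))^-1 * dot (ev eta l) (covs v).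
Proof. by rewrite wsol_fcomb (ipZl hip) cov_fcomb. Qed.

Lemma cov_fv_w l t : cov (fv t) (w l) = Num.sqrt (lam l) * eta l t.
Proof.
have /ffunP/(_ t) := covs_fcomb (ev eta l).
rewrite wsol_fcomb (ipZr hip) (Aop_ev (eta_eig l)) vecZE !ffunE => ->.
move: (sqr_sqrt_lam l) (sqrt_lam_gt0 l); set s := Num.sqrt (lam l) => <- s_gt0.
by field; rewrite gt_eqF.
Qed.

Lemma covs_w l : covs (w l) = Num.sqrt (lam l) *: ev eta l.
Proof. by apply/ffunP => t; rewrite vecZE !ffunE cov_fv_w. Qed.

Lemma cov_ww l m : cov (w l) (w m) = (l == m)%:R.
Proof.
rewrite cov_w covs_w (ipZr (dot_ip _ _)) (ev_orthonormal eta_on).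
have [<-|_] := eqVneq l m; last by rewrite !mulr0.
by rewrite mulr1 mulVf // gt_eqF // sqrt_lam_gt0.
Qed.

Lemma w_inspan_fv l : inspan fv (w l).
Proof.
apply/inspanPZ/inspanP_sum => t _; apply: inspanPZ.
exact: inspanP_gen.
Qed.

Lemma prevwP l u :
  u \in prevw fv lam eta l <-> exists2 m : 'I_rf, (m < l)%N & u = w m.
Proof.
rewrite /prevw; split=> [/mapP[m]|[m lt_ml ->]].
  by rewrite mem_filter => /andP[lt_ml _] ->; exists m.
by apply: map_f; rewrite mem_filter lt_ml mem_enum.
Qed.

Lemma corr2_le_block k z v : inspan (x k) z -> cov z z = 1 -> cov v v = 1 ->
  corr cov z v ^+ 2 <= \sum_(i < r k) cov (fk fv i) v ^+ 2.
Proof.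
move=> /inspan_fk z_span z1 v1; rewrite corr_unit //.
exact: (bessel_unit hip (@fk_on k)).
Qed.

Lemma dot_covs_le (l : 'I_rf) v : cov v v = 1 ->
  (forall m : 'I_rf, (m < l)%N -> cov (w m) v = 0) -> dot (covs v) (covs v) <= lam l.
Proof.
move=> v1 v_orth; set d := dot (covs v) (covs v).
have u_orth (m : 'I_rf) : (m < l)%N -> dot (ev eta m) (covs v) = 0.
  move/v_orth/eqP; rewrite cov_w mulf_eq0 invr_eq0 gt_eqF ?sqrt_lam_gt0 //=.
  by move/eqP.
have le_uAu := rayleigh_le A_sym eta_on eta_eig lam_kth u_orth.
have d2_le : d ^+ 2 <= lam l * d.
  have := cauchy_schwarz hip (fcomb (covs v)) v.
  by rewrite v1 mulr1 !cov_fcomb covs_fcomb => /le_trans; apply.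
have [d0|d_neq0] := eqVneq d 0; first by rewrite d0 ltW ?lam_gt0.
have d_gt0 : 0 < d by rewrite lt_def d_neq0 (ip_ge0 (dot_ip _ _)).
by rewrite -(ler_pM2r d_gt0) -expr2.
Qed.

Lemma stage_obj_le l z w' : stage_feasible cov x (prevw fv lam eta l) z w' ->
  gcca_obj cov z w' <= lam l.
Proof.
case=> z_feas w'1 w'_orth; apply: le_trans (dot_covs_le w'1 _) => [|m lt_ml].
  rewrite /dot sum_blocks; apply: ler_sum => k _; have [z_span z1] := z_feas k.
  apply: le_trans (corr2_le_block z_span z1 w'1) _.
  by apply: ler_sum => i _; rewrite /covs ffunE expr2 lexx.
by rewrite (ip_sym hip); apply/w'_orth/prevwP; exists m.
Qed.

Lemma inspan_x_fv k v : inspan (x k) v -> inspan fv v.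
Proof.
move/inspan_fk; apply: inspanP_trans => i _.
exact: (inspanP_gen fv (i := existT _ k i)).
Qed.

Lemma etanorm_sq l k : etanorm eta l k ^+ 2 = \sum_(i < r k) eta l (existT _ k i) ^+ 2.
Proof. by rewrite sqr_sqrtr // sumr_ge0 // => i _; rewrite sqr_ge0. Qed.

Lemma etanorm_eq0 l k : etanorm eta l k = 0 -> forall i, eta l (existT _ k i) = 0.
Proof.
move=> n0 i; have /psumr_eq0P eta0 : \sum_(i < r k) eta l (existT _ k i) ^+ 2 = 0.
  by rewrite -etanorm_sq n0 expr0n.
by apply/eqP; rewrite -sqrf_eq0 eta0 // => j _; apply: sqr_ge0.
Qed.

Lemma sum_etanorm_sq l : \sum_k etanorm eta l k ^+ 2 = 1.
Proof.
under eq_bigr do rewrite etanorm_sq.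
rewrite -(sum_blocks (fun t => eta l t ^+ 2)).
by under eq_bigr do rewrite expr2; rewrite eta_on eqxx.
Qed.

Lemma zdir_inspan l k : inspan (x k) (zdir fv eta l k).
Proof. by apply/inspan_fk; exists (fun i => eta l (existT _ k i) / etanorm eta l k). Qed.

Lemma cov_zdir l k : etanorm eta l k != 0 -> cov (zdir fv eta l k) (zdir fv eta l k) = 1.
Proof.
move=> n_neq0; rewrite (ip_orthonormal_norm hip (@fk_on k)).
under eq_bigr do rewrite expr_div_n.
by rewrite -mulr_suml -etanorm_sq divff // expf_neq0.
Qed.

Lemma proj_w l k :
  \sum_(i < r k) cov (w l) (fk fv i) *: fk fv i =
  (Num.sqrt (lam l) * etanorm eta l k) *: zII fv eta l k.
Proof.
under eq_bigr do rewrite (ip_sym hip) cov_fv_w -scalerA.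
rewrite -scaler_sumr -scalerA; congr (_ *: _); rewrite /zII.
have [n0|n_neq0] := eqVneq (etanorm eta l k) 0.
  by rewrite n0 scaler0 big1 // => i _; rewrite etanorm_eq0 // scale0r.
rewrite scaler_sumr; apply: eq_bigr => i _.
by rewrite scalerA mulrC divfK.
Qed.

Lemma cov_w_inspan l k v : inspan (x k) v ->
  cov (w l) v = Num.sqrt (lam l) * etanorm eta l k * cov (zII fv eta l k) v.
Proof.
move=> /inspan_fk v_span.
by rewrite (ip_orthonormal_proj hip (@fk_on k) _ v_span) proj_w (ipZl hip).
Qed.

Lemma cov_zdir_w l k : etanorm eta l k != 0 ->
  cov (zdir fv eta l k) (w l) = Num.sqrt (lam l) * etanorm eta l k.
Proof.
move=> n_neq0; rewrite (ip_sym hip) (cov_w_inspan _ (zdir_inspan l k)).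
by rewrite /zII (negbTE n_neq0) cov_zdir // mulr1.
Qed.

Lemma validI_spec l k z : validI cov fv x eta l k z ->
  [/\ inspan (x k) z, cov z z = 1
    & exists s : R, (s = 1 \/ s = -1) /\
        cov z (w l) = s * (Num.sqrt (lam l) * etanorm eta l k)].
Proof.
rewrite /validI; case: eqP => [n0 [z_span z1]|/eqP n_neq0 [s [s_sign ->]]].
  split=> //; exists 1; split; first by left.
  by rewrite (ip_sym hip) (cov_w_inspan _ z_span) n0 !(mulr0, mul0r).
split; first exact/inspanPZ/zdir_inspan.
  by rewrite (ipZl hip) (ipZr hip) cov_zdir // mulr1; case: s_sign => ->; rewrite ?mulrNN mulr1.
by exists s; rewrite (ipZl hip) cov_zdir_w.
Qed.

Lemma wsol_stage_solution l z : (forall k, validI cov fv x eta l k (z k)) ->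
  [/\ stage_solution cov x (prevw fv lam eta l) z (w l),
      forall k, exists s : R, (s = 1 \/ s = -1) /\
        corr cov (z k) (w l) = s * (Num.sqrt (lam l) * etanorm eta l k)
    & gcca_obj cov z (w l) = lam l].
Proof.
move=> z_valid; have w1 := cov_ww l l; rewrite eqxx in w1.
have corr_zw k : corr cov (z k) (w l) = cov (z k) (w l).
  by have [_ z1 _] := validI_spec (z_valid k); rewrite corr_unit.
have obj : gcca_obj cov z (w l) = lam l.
  rewrite /gcca_obj -[RHS]mulr1 -(sum_etanorm_sq l) mulr_sumr; apply: eq_bigr => k _.
  have [_ _ [s [s_sign zw]]] := validI_spec (z_valid k).
  by rewrite corr_zw zw !exprMn sqr_sqrt_lam; case: s_sign => ->; rewrite ?sqrrN expr1n mul1r.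
split=> //; last first.
  by move=> k; have [_ _ [s [s_sign zw]]] := validI_spec (z_valid k); exists s; rewrite corr_zw.
split=> [|z' w' /stage_obj_le]; last by rewrite obj.
split=> // [k|u /prevwP[m lt_ml ->]].
  by have [] := validI_spec (z_valid k).
by rewrite cov_ww; case: eqP lt_ml => // ->; rewrite ltnn.
Qed.

Lemma w_expand v : sum_span x predT v -> v = \sum_l cov v (w l) *: w l.
Proof.
have [b [_ b_span]] := rf_dim; move/b_span.
apply: (orthonormal_expansion hip (PI := predT) (PJ := predT)) => // [j j' _ _|j _].
  exact: cov_ww.
by apply/b_span/sum_span_fv/w_inspan_fv.
Qed.

Lemma sum_span_w v : sum_span x predT v <-> inspan w v.
Proof.
split=> [v_span|w_span]; first by exists (fun l => cov v (w l)); exact: w_expand.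
by apply/sum_span_fv; apply: inspanP_trans w_span => l _; apply: w_inspan_fv.
Qed.

Lemma etanorm_eq0P l k :
  etanorm eta l k = 0 <-> (forall v, inspan (x k) v -> cov (w l) v = 0).
Proof.
split=> [n0 v v_span|w_orth]; first by rewrite (cov_w_inspan _ v_span) n0 mulr0 mul0r.
rewrite /etanorm big1 ?sqrtr0 // => i _.
have /eqP := w_orth _ (fk_inspan i); rewrite (ip_sym hip) cov_fv_w mulf_eq0.
by rewrite gt_eqF ?sqrt_lam_gt0 //= => /eqP->; rewrite expr0n.
Qed.

Lemma corr_zII_ge0 l k : 0 <= corr cov (zII fv eta l k) (w l).
Proof.
rewrite /zII; have [_|n_neq0] := eqVneq (etanorm eta l k) 0.
  by rewrite /corr /sd (ip0l hip) sqrtr0 eqxx.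
rewrite corr_unit ?cov_zdir ?cov_zdir_w ?mulr_ge0 ?sqrtr_ge0 //.
by rewrite cov_ww eqxx.
Qed.

Lemma zII_inspan l k : inspan (x k) (zII fv eta l k).
Proof. by rewrite /zII; case: eqP => _; [exact: inspanP0 | exact: zdir_inspan]. Qed.

Lemma inspan_zII k v : inspan (x k) v <-> inspan (fun l => zII fv eta l k) v.
Proof.
split=> [v_span|]; last by apply: inspanP_trans => l _; apply: zII_inspan.
have v_exp := w_expand ((sum_span_fv v).2 (inspan_x_fv v_span)).
exists (fun l => cov v (w l) * (Num.sqrt (lam l) * etanorm eta l k)).
transitivity (\sum_(i < r k) (\sum_l cov v (w l) * cov (w l) (fk fv i)) *: fk fv i).
  rewrite {1}(fk_expand v_span); apply: eq_bigr => i _; congr (_ *: _).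
  by rewrite {1}v_exp (ip_suml hip); apply: eq_bigr => l _; rewrite (ipZl hip).
under eq_bigr do rewrite scaler_suml.
rewrite exchange_big; apply: eq_bigr => l _.
by rewrite -scalerA -proj_w scaler_sumr; apply: eq_bigr => i _; rewrite scalerA.
Qed.

Lemma orth_z_orth_w l k z v : validI cov fv x eta l k z \/ z = zII fv eta l k ->
  inspan (x k) v -> cov z v = 0 -> cov (w l) v = 0.
Proof.
move=> z_choice v_span; rewrite (cov_w_inspan _ v_span).
have [n0|n_neq0] := eqVneq (etanorm eta l k) 0; first by rewrite n0 mulr0 mul0r.
case: z_choice => [|-> ->]; last by rewrite mulr0.
rewrite /validI /zII (negbTE n_neq0) => -[s [s_sign ->]] /eqP.
have s_neq0 : s != 0 by case: s_sign => ->; rewrite ?oppr_eq0 oner_eq0.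
by rewrite (ipZl hip) mulf_eq0 (negbTE s_neq0) => /eqP->; rewrite mulr0.
Qed.

Definition blockv k v : vec := [ffun t => if tag t == k then cov (fv t) v else 0].

Lemma blockvE k v (i : 'I_(r k)) : blockv k v (existT _ k i) = cov (fk fv i) v.
Proof. by rewrite ffunE /= eqxx. Qed.

Lemma dot_blockv k v g :
  dot (blockv k v) g = \sum_(i < r k) cov (fk fv i) v * g (existT _ k i).
Proof.
rewrite /dot sum_blocks (bigD1 k) //= [X in _ + X]big1 ?addr0 => [|j nj]; last first.
  by apply: big1 => i _; rewrite ffunE /= (negbTE nj) mul0r.
by apply: eq_bigr => i _; rewrite blockvE.
Qed.

Lemma fcomb_blockv k v : inspan (x k) v -> fcomb (blockv k v) = v.
Proof.
move=> v_span; rewrite [RHS](fk_expand v_span) /fcomb sum_blocks (bigD1 k) //=.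
rewrite [X in _ + X]big1 ?addr0 => [|j nj]; last first.
  by apply: big1 => i _; rewrite ffunE /= (negbTE nj) scale0r.
by apply: eq_bigr => i _; rewrite blockvE (ip_sym hip).
Qed.

Lemma cov_w_blockv l k v : inspan (x k) v ->
  cov (w l) v = Num.sqrt (lam l) * dot (blockv k v) (ev eta l).
Proof.
move=> /inspan_fk v_span; rewrite (ip_orthonormal_proj hip (@fk_on k) _ v_span).
rewrite (ip_suml hip) dot_blockv mulr_sumr; apply: eq_bigr => i _.
by rewrite (ipZl hip) (ip_sym hip (w l)) cov_fv_w ffunE mulrCA mulrC.
Qed.

(* The block vector of [v] is orthogonal to the [eta m], [m < l], and has
   Rayleigh quotient 1. *)
Lemma block_rayleigh (l : 'I_rf) k v : inspan (x k) v -> v != 0 ->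
  (forall m : 'I_rf, (m < l)%N -> cov (w m) v = 0) ->
  1 <= lam l /\ (lam l = 1 -> forall t, tag t != k -> cov (fv t) v = 0).
Proof.
move=> v_span v_neq0 v_orth; set u := blockv k v.
have v_gt0 := ip_gt0 hip v_neq0.
have Aop_u : Aop A u = covs v by rewrite -covs_fcomb fcomb_blockv.
have uu : dot u u = cov v v.
  by rewrite dot_blockv (cov_fk_norm v_span); apply: eq_bigr => i _; rewrite blockvE expr2.
have uAu : dot u (Aop A u) = cov v v.
  by rewrite Aop_u dot_blockv (cov_fk_norm v_span); apply: eq_bigr => i _; rewrite ffunE expr2.
have u_orth (m : 'I_rf) : (m < l)%N -> dot (ev eta m) u = 0.
  move/v_orth/eqP; rewrite (cov_w_blockv _ v_span) (ip_sym (dot_ip _ _)) mulf_eq0.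
  by rewrite gt_eqF ?sqrt_lam_gt0 //= => /eqP.
have := rayleigh_le A_sym eta_on eta_eig lam_kth u_orth.
rewrite uu uAu -{1}[cov v v]mul1r ler_pM2r // => lam_ge1; split=> // lam1 t t_notk.
have := rayleigh_eq A_sym eta_on eta_eig lam_kth u_orth.
rewrite uu uAu lam1 mul1r scale1r Aop_u => /(_ erefl)/ffunP/(_ t).
by rewrite !ffunE (negbTE t_notk).
Qed.

Lemma cov_sum_span_other k v : (forall t, tag t != k -> cov (fv t) v = 0) ->
  forall u, sum_span x (fun j => j != k) u -> cov v u = 0.
Proof.
move=> v_orth _ [u [u_span ->]]; rewrite (ip_sumr hip) big1 // => j j_neqk.
rewrite (fk_expand (u_span j j_neqk)) (ip_sumr hip) big1 // => i _.
by rewrite (ipZr hip) (ip_sym hip v) /fk v_orth ?mulr0.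
Qed.

Hypothesis r_gt0 : forall k, (0 < r k)%N.

Lemma stage_solution_in_block (zz : 'I_rf -> 'I_K -> V) (l : 'I_rf) k :
  (forall m, validI cov fv x eta m k (zz m k) \/ zz m k = zII fv eta m k) ->
  lam l <= 1 ->
  ~ (forall v, inspanP (fun m : 'I_rf => (m < l)%N) (fun m => zz m k) v <->
               inspan (x k) v) ->
  exists (z : 'I_K -> V) (w' : V),
    [/\ stage_solution cov x (prevw fv lam eta l) z w', inspan (x k) w'
      & forall v, sum_span x (fun j => j != k) v -> cov w' v = 0].
Proof.
move=> zz_choice lam_le1 zz_nspan.
have zz_span m : inspan (x k) (zz m k).
  by case: (zz_choice m) => [/validI_spec[] | ->] //; apply: zII_inspan.
have [v [v_span v_neq0] v_orth] : exists2 v, inspan (x k) v /\ v != 0 &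
    forall m : 'I_rf, (m < l)%N -> cov (zz m k) v = 0.
  have zz_fk m : inspan (fun i : 'I_(r k) => fk fv i) (zz m k) by apply/inspan_fk.
  have [|v [/inspan_fk v_span v_neq0] v_orth] := orthogonal_in_span hip (@fk_on k)
    (P := fun m : 'I_rf => (m < l)%N) (h := fun m => zz m k) (fun m _ => zz_fk m).
    move=> span_fk; apply: zz_nspan => v; split; last by move/inspan_fk/span_fk.
    by apply: inspanP_trans => m _; apply: zz_span.
  by exists v.
have w_orth (m : 'I_rf) : (m < l)%N -> cov (w m) v = 0.
  by move=> lt_ml; apply: orth_z_orth_w (zz_choice m) v_span (v_orth m lt_ml).
have [lam_ge1 lam1_orth] := block_rayleigh v_span v_neq0 w_orth.
have lam1 : lam l = 1 by apply/eqP; rewrite eq_le lam_le1.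
pose w' := (Num.sqrt (cov v v))^-1 *: v.
have w'1 : cov w' w' = 1 by apply: ip_normalize.
pose z j := if j == k then w' else fk fv (Ordinal (r_gt0 j)).
have z_feas : stage_feasible cov x (prevw fv lam eta l) z w'.
  split=> // [j|u /prevwP[m lt_ml ->]]; last first.
    by rewrite (ipZl hip) (ip_sym hip) w_orth ?mulr0.
  rewrite /z; case: eqP => [->|_]; first by split=> //; apply: inspanPZ.
  by split; [apply: fk_inspan | rewrite fk_on eqxx].
have z_opt z' w'' : stage_feasible cov x (prevw fv lam eta l) z' w'' ->
    gcca_obj cov z' w'' <= gcca_obj cov z w'.
  move=> /stage_obj_le /le_trans; apply.
  rewrite lam1 /gcca_obj (bigD1 k) //= /z eqxx corr_unit // w'1 expr1n.
  by rewrite lerDl sumr_ge0 // => j _; apply: sqr_ge0.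
exists z, w'; split; [by split | exact: inspanPZ | move=> u].
by move/(cov_sum_span_other (lam1_orth lam1)) => vu; rewrite (ipZl hip) vu mulr0.
Qed.

End Carroll.

Theorem theorem1
  (R : rcfType) (V : lmodType R) (cov : V -> V -> R)
  (K : nat) (p : 'I_K -> nat) (x : forall k : 'I_K, 'I_(p k) -> V)
  (r : 'I_K -> nat) (fv : {k : 'I_K & 'I_(r k)} -> V)
  (rf : nat) (lam : 'I_rf -> R) (eta : 'I_rf -> {k : 'I_K & 'I_(r k)} -> R) :
  inner_product cov ->
  (1 < K)%N ->
  (forall k : 'I_K, (0 < r k)%N) ->
  (forall k : 'I_K, orthonormalF cov (fun i : 'I_(r k) => fk fv i) /\
     (forall v, inspan (x k) v <-> inspan (fun i : 'I_(r k) => fk fv i) v)) ->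
  is_dim (sum_span x predT) rf ->
  (* indices are 0-based: [lam l] is the (l+1)-th largest eigenvalue *)
  (forall l l' : 'I_rf, \sum_t eta l t * eta l' t = (l == l')%:R) ->
  (forall (l : 'I_rf) t, \sum_s cov (fv t) (fv s) * eta l s = lam l * eta l t) ->
  (forall l : 'I_rf, kth_eig (fun t s => cov (fv t) (fv s)) l (lam l)) ->
  let w := wsol fv lam eta in
  (* (i) *)
  [/\ (forall (l : 'I_rf) (z : 'I_K -> V),
         (forall k, validI cov fv x eta l k (z k)) ->
         [/\ stage_solution cov x (prevw fv lam eta l) z (w l),
             (forall k, exists s : R, (s = 1 \/ s = -1) /\
                corr cov (z k) (w l) = s * (Num.sqrt (lam l) * etanorm eta l k))
           & gcca_obj cov z (w l) = lam l]),
      (forall v, sum_span x predT v <-> inspan w v),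
  (* (ii) *)
      (forall (l : 'I_rf) (k : 'I_K),
         (etanorm eta l k = 0 <->
            (forall v, inspan (x k) v -> cov (w l) v = 0)) /\
         0 <= corr cov (zII fv eta l k) (w l)),
      (forall (k : 'I_K) v,
         inspan (x k) v <-> inspan (fun l => zII fv eta l k) v)
  (* (iii) *)
    & forall zz : 'I_rf -> 'I_K -> V,
        (forall l k, validI cov fv x eta l k (zz l k)) \/
        (forall l k, zz l k = zII fv eta l k) ->
        forall (l : 'I_rf) (k : 'I_K),
          lam l <= 1 ->
          ~ (forall v, inspanP (fun m : 'I_rf => (m < l)%N)
                               (fun m => zz m k) v <-> inspan (x k) v) ->
          exists (z : 'I_K -> V) (w' : V),
            [/\ stage_solution cov x (prevw fv lam eta l) z w',
                inspan (x k) w'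
              & forall v, sum_span x (fun j => j != k) v -> cov w' v = 0]].
Proof.
move=> hip _ r_gt0 f_basis rf_dim eta_on eta_eig lam_kth w.
split=> [l z z_valid | v | l k | k v | zz zz_choice l k lam_le1 zz_nspan].
- exact: (wsol_stage_solution hip f_basis rf_dim eta_on eta_eig lam_kth).
- exact: (sum_span_w hip f_basis rf_dim eta_on eta_eig lam_kth).
- split; first exact: (etanorm_eq0P hip f_basis rf_dim eta_eig lam_kth).
  exact: (corr_zII_ge0 hip f_basis rf_dim eta_on eta_eig lam_kth).
- exact: (inspan_zII hip f_basis rf_dim eta_on eta_eig lam_kth).
- apply: (stage_solution_in_block hip f_basis rf_dim eta_on eta_eig lam_kth r_gt0)
    lam_le1 zz_nspan => m.
  by case: zz_choice => zz_eq; [left | right].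
Qed.
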